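(* Let $\mathbf P=UV^\top$ be an ergodic transition matrix on $\{1,\dots,p\}$ with stationary distribution $\pi$, where $U,V\in\mathbb R^{p\times r}$ are entrywise nonnegative with $U\mathbf 1_r=\mathbf 1_p$, $V^\top\mathbf 1_p=\mathbf 1_r$. Suppose there are constants $c_1,C_1,c_2>0$ with $c_1p^{-1}\le\pi_j\le C_1p^{-1}$ for all $j$, $\lambda_{\min}(U^\top[\mathrm{diag}(\pi)]^2U)\ge c_2p^{-1}r^{-1}$ and $\lambda_{\min}(V^\top[\mathrm{diag}(\pi)]^{-1}V)\ge c_2r$. Let $\mathbf Q=\mathrm{diag}(\pi)\mathbf P[\mathrm{diag}(\pi)]^{-1/2}$ have compact singular value decomposition $\mathbf Q=\mathbf G\Sigma\mathbf H^\top$ with $\mathbf G,\mathbf H\in\mathbb R^{p\times r}$ having orthonormal columns and $\Sigma\in\mathbb R^{r\times r}$ diagonal positive. Then for every $j=1,\dots,p$, $$\|\mathbf e_j^\top\mathbf G\|_2\le c_2^{-1/2}\pi_j\sqrt{pr},\qquad \|\mathbf e_j^\top\mathbf H\|_2\le C_1c_2^{-3/2}\sqrt{\pi_jr}.$$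
   Context: $\mathbf e_j$ denotes the $j$-th standard basis vector of $\mathbb R^p$. *)

From HB Require Import structures.
From mathcomp Require Import all_boot all_order all_algebra.
From mathcomp Require Import reals.
Set Implicit Arguments. Unset Strict Implicit. Unset Printing Implicit Defensive.
Import Order.TTheory GRing.Theory Num.Theory.
Local Open Scope ring_scope.

Section Defs.
Variable R : realType.

Definition irreducible (p : nat) (P : 'M[R]_p) : Prop :=
  forall i j : 'I_p, exists n : nat, 0 < (P ^+ n) i j.

(* aperiodic: every state has period 1, i.e. the gcd of the return times
   {n >= 1 : P^n(i,i) > 0} is 1 (no d >= 2 divides all return times) *)
Definition aperiodic (p : nat) (P : 'M[R]_p) : Prop :=
  forall i : 'I_p, forall d : nat, (1 < d)%N ->
    exists n : nat, (0 < n)%N /\ 0 < (P ^+ n) i i /\ ~~ (d %| n)%N.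

Definition ergodic (p : nat) (P : 'M[R]_p) : Prop := irreducible P /\ aperiodic P.

Definition transition_matrix (p : nat) (P : 'M[R]_p) : Prop :=
  (forall i j, 0 <= P i j) /\ (forall i, \sum_j P i j = 1).

Definition stationary_distribution (p : nat) (P : 'M[R]_p) (pi : 'rV[R]_p) : Prop :=
  (forall j, 0 <= pi 0 j) /\ \sum_j pi 0 j = 1 /\ pi *m P = pi.

(* lambda_min(M) >= c: every eigenvalue of M is >= c
   (used only for real symmetric M, whose spectrum is real) *)
Definition lambda_min_ge (n : nat) (M : 'M[R]_n) (c : R) : Prop :=
  forall a : R, eigenvalue M a -> c <= a.

Definition row_norm2 (m n : nat) (A : 'M[R]_(m, n)) (j : 'I_m) : R :=
  Num.sqrt (\sum_k A j k ^+ 2).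

End Defs.

From HB Require Import structures.
From mathcomp Require Import all_boot all_order all_algebra.
From mathcomp Require Import reals ring lra.
From mathcomp Require Import classical_sets topology normedtype derive.
Import Order.TTheory GRing.Theory Num.Theory.
Import numFieldTopology.Exports numFieldNormedType.Exports.
Local Open Scope ring_scope.

(* The singular value decomposition Q = G S H^T with orthonormal G, H gives
   G = Q H S^-1 = D U A and H = Q^T G S^-1 = D^-1/2 V B, where D = diag(pi), and
   the orthonormality of G and H reads A^T (U^T D^2 U) A = I and
   B^T (V^T D^-1 V) B = I.  If A^T M A = I and M >= c I then c |u A|^2 <= |u|^2,
   so the rows of G and H are controlled by the rows of U and V: the rows of U
   are probability vectors, and the j-th row sum of V is at most pi_j C1 r / c2
   because pi_j = sum_k (pi U)_k V_jk by stationarity while (pi U)_k >= c2 / (C1 r)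
   by the k-th diagonal entry of U^T D^2 U.  The eigenvalue hypotheses give
   the bounds M >= c I through the minimum of the form on the unit sphere. *)

Section BilinearForm.
Context {R : realFieldType} {n : nat}.
Implicit Types (M N : 'M[R]_n) (x y z : 'rV[R]_n).

Definition mxform M x y : R := (x *m M *m y^T) 0 0.

Lemma mxformDl M x y z : mxform M (x + y) z = mxform M x z + mxform M y z.
Proof. by rewrite /mxform !mulmxDl mxE. Qed.

Lemma mxformZl M a x z : mxform M (a *: x) z = a * mxform M x z.
Proof. by rewrite /mxform -!scalemxAl mxE. Qed.

Lemma mxformDr M x y z : mxform M z (x + y) = mxform M z x + mxform M z y.
Proof. by rewrite /mxform linearD /= mulmxDr mxE. Qed.

Lemma mxformZr M a x z : mxform M z (a *: x) = a * mxform M z x.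
Proof. by rewrite /mxform linearZ /= -scalemxAr mxE. Qed.

Lemma mxformC M x y : M^T = M -> mxform M x y = mxform M y x.
Proof.
move=> sM; rewrite /mxform; transitivity ((x *m M *m y^T)^T 0 0).
  by rewrite [RHS]mxE.
by rewrite !trmx_mul trmxK sM mulmxA.
Qed.

Lemma mxform1C x y : mxform 1%:M x y = mxform 1%:M y x.
Proof. by apply: mxformC; rewrite tr_scalar_mx. Qed.

Lemma mxform1_mulmx M x y : mxform 1%:M (x *m M) y = mxform M x y.
Proof. by rewrite /mxform mulmx1. Qed.

Lemma mxformE M x : mxform M x x = \sum_i \sum_j x 0 i * M i j * x 0 j.
Proof.
rewrite /mxform mxE exchange_big; apply: eq_bigr => j _.
by rewrite !mxE mulr_suml; apply: eq_bigr => i _; rewrite ?mxE.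
Qed.

Lemma mxform1E x : mxform 1%:M x x = \sum_i x 0 i ^+ 2.
Proof. by rewrite /mxform mulmx1 mxE; apply: eq_bigr => i _; rewrite mxE expr2. Qed.

Lemma mxform1_ge0 x : 0 <= mxform 1%:M x x.
Proof. by rewrite mxform1E sumr_ge0 // => i _; exact: sqr_ge0. Qed.

Lemma mxform1_eq0 x : (mxform 1%:M x x == 0) = (x == 0).
Proof.
apply/idP/eqP => [|->]; last by rewrite /mxform !mul0mx mxE.
rewrite mxform1E psumr_eq0 => [/allP x0|i _]; last exact: sqr_ge0.
apply/rowP => i; rewrite mxE; apply/eqP; rewrite -sqrf_eq0.
exact: (implyP (x0 i (mem_index_enum i))).
Qed.

Lemma mxform_delta M k : mxform M (delta_mx 0 k) (delta_mx 0 k) = M k k.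
Proof. by rewrite /mxform -rowE trmx_delta -colE !mxE. Qed.

Lemma mxform1_le_sqr_sum x : (forall k, 0 <= x 0 k) ->
  mxform 1%:M x x <= (\sum_k x 0 k) ^+ 2.
Proof.
move=> x_ge0; rewrite mxform1E [leRHS]expr2 mulr_suml; apply: ler_sum => k _.
rewrite expr2 ler_wpM2l // (bigD1 k) //= lerDl.
by apply: sumr_ge0.
Qed.

(* Expand the form at x - t (x N) with t = |x N|^2 / (N(xN, xN) + 1). *)
Lemma psd_mxform_eq0 N x : N^T = N -> (forall y, 0 <= mxform N y y) ->
  mxform N x x = 0 -> x *m N = 0.
Proof.
move=> sN N_ge0 Nx0; apply/eqP; rewrite -mxform1_eq0 mxform1_mulmx.
set y := x *m N; set a := mxform N x y; set b := mxform N y y.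
have b_ge0 : 0 <= b := N_ge0 y.
have a_ge0 : 0 <= a by rewrite /a -mxform1_mulmx mxform1_ge0.
have := N_ge0 (x + (- (a / (b + 1))) *: y).
rewrite !(mxformDl, mxformDr, mxformZl, mxformZr) (mxformC N y x sN) Nx0 -/a -/b.
set t := a / (b + 1).
have tE : t * (b + 1) = a by rewrite /t divfK // gt_eqF // ltr_wpDl.
move=> h; apply/eqP; nra.
Qed.

End BilinearForm.

Section FormBounds.
Context {R : realFieldType}.

(* With x = u A A^T, both M(x, x) and <u, x> equal |u A|^2; expand |u - c x|^2 >= 0. *)
Lemma mulmx_mxform1_le {n k} {M : 'M[R]_n} {A : 'M[R]_(n, k)} {c : R} (u : 'rV[R]_n) :
  0 < c -> (forall x, c * mxform 1%:M x x <= mxform M x x) ->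
  A^T *m M *m A = 1%:M -> c * mxform 1%:M (u *m A) (u *m A) <= mxform 1%:M u u.
Proof.
move=> c_gt0 M_ge A_orth; set x := u *m A *m A^T.
have Mx : mxform M x x = mxform 1%:M (u *m A) (u *m A).
  rewrite /mxform /x !trmx_mul !trmxK.
  have -> : u *m A *m A^T *m M *m (A *m (A^T *m u^T)) =
            u *m A *m (A^T *m M *m A) *m (A^T *m u^T) by rewrite !mulmxA.
  by rewrite A_orth mulmx1 mulmxA.
have ux : mxform 1%:M u x = mxform 1%:M (u *m A) (u *m A).
  by rewrite /mxform !mulmx1 /x trmx_mul trmxK mulmxA.
have := mxform1_ge0 (u + (- c) *: x).
rewrite !(mxformDl, mxformDr, mxformZl, mxformZr) (mxform1C x u) ux.
have := M_ge x; rewrite Mx; nra.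
Qed.

Lemma row_diag_mulmx_mxform1_le {m n k} (d : 'rV[R]_m) (Y : 'M[R]_(m, n)) j
    {M : 'M[R]_n} {A : 'M[R]_(n, k)} {c : R} :
  0 < c -> (forall x, c * mxform 1%:M x x <= mxform M x x) ->
  A^T *m M *m A = 1%:M ->
  c * mxform 1%:M (row j (diag_mx d *m Y *m A)) (row j (diag_mx d *m Y *m A))
    <= d 0 j ^+ 2 * mxform 1%:M (row j Y) (row j Y).
Proof.
move=> c_gt0 M_ge A_orth.
have -> : row j (diag_mx d *m Y *m A) = d 0 j *: (row j Y *m A).
  by rewrite row_mul scalemxAl; congr (_ *m _); apply/rowP => i; rewrite mul_diag_mx !mxE.
rewrite mxformZl mxformZr; set q := mxform _ (row j Y *m A) _.
have -> : c * (d 0 j * (d 0 j * q)) = d 0 j ^+ 2 * (c * q) by ring.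
by rewrite ler_wpM2l ?sqr_ge0 // (mulmx_mxform1_le _ c_gt0 M_ge A_orth).
Qed.

End FormBounds.

Section SingularValueDecomposition.
Context {F : fieldType} {m n k : nat}.
Context {Q : 'M[F]_(m, n)} {G : 'M[F]_(m, k)} {H : 'M[F]_(n, k)} {s : 'rV[F]_k}.
Hypotheses (s_neq0 : forall i, s 0 i != 0) (svdQ : Q = G *m diag_mx s *m H^T).

Let s_inv := diag_mx (\row_i (s 0 i)^-1).

Lemma diag_mx_mul_inv : diag_mx s *m s_inv = 1%:M.
Proof.
by rewrite mulmx_diag -diag_const_mx; congr diag_mx; apply/rowP => i; rewrite !mxE mulfV.
Qed.

Lemma svd_left_factor : H^T *m H = 1%:M -> G = Q *m H *m s_inv.
Proof.
by move=> H_orth; rewrite svdQ -(mulmxA _ H^T) H_orth mulmx1 -mulmxA diag_mx_mul_inv mulmx1.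
Qed.

Lemma svd_right_factor : G^T *m G = 1%:M -> H = Q^T *m G *m s_inv.
Proof.
move=> G_orth; rewrite svdQ !trmx_mul trmxK tr_diag_mx !mulmxA -(mulmxA _ G^T) G_orth.
by rewrite mulmx1 -mulmxA diag_mx_mul_inv mulmx1.
Qed.

End SingularValueDecomposition.

Lemma trmx_congr_sym {R : comRingType} {m n} (A : 'M[R]_(m, n)) {S : 'M[R]_m} :
  S^T = S -> (A^T *m S *m A)^T = A^T *m S *m A.
Proof. by move=> sS; rewrite !trmx_mul trmxK sS mulmxA. Qed.

Lemma mxform_ge_of_unit_sphere {R : rcfType} {n} (M : 'M[R]_n) m :
  (forall x, mxform 1%:M x x = 1 -> m <= mxform M x x) ->
  forall y, m * mxform 1%:M y y <= mxform M y y.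
Proof.
move=> min_m y; have [->|y_neq0] := eqVneq y 0.
  by rewrite /mxform !mul0mx mxE mulr0.
have y_gt0 : 0 < mxform 1%:M y y by rewrite lt_def mxform1_eq0 y_neq0 mxform1_ge0.
set t := Num.sqrt (mxform 1%:M y y).
have t_gt0 : 0 < t by rewrite sqrtr_gt0.
have tt : t * t = mxform 1%:M y y by rewrite -expr2 sqr_sqrtr // ltW.
have := min_m (t^-1 *: y); rewrite !(mxformZl, mxformZr) -tt.
have -> : t^-1 * (t^-1 * (t * t)) = 1 by field; rewrite gt_eqF.
move=> /(_ erefl); rewrite -(ler_pM2r (mulr_gt0 t_gt0 t_gt0)).
by have -> : t^-1 * (t^-1 * mxform M y y) * (t * t) = mxform M y y by field; rewrite gt_eqF.
Qed.

Section Rayleigh.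
Context {R : realType} {n : nat}.
Local Open Scope classical_set_scope.

Lemma mxform_continuous (M : 'M[R]_n) : continuous (fun x => mxform M x x).
Proof.
rewrite (boolp.funext (fun x => mxformE M x)).
apply: continuous_big => [|i _]; first exact: add_continuous.
apply: continuous_big => [|j _ x]; first exact: add_continuous.
apply: (@continuousM R _ (fun x : 'rV[R]_n => x 0 i * M i j) (fun x => x 0 j)).
  apply: (@continuousM R _ _ (fun=> M i j)); first exact: coord_continuous.
  exact: cst_continuous.
exact: coord_continuous.
Qed.

Lemma unit_sphere_compact : compact [set x : 'rV[R]_n | mxform 1%:M x x = 1].
Proof.
have box_compact : compact [set x : 'rV[R]_n | forall i, `[(-1 : R), 1]%classic (x ord0 i)].
  by apply: (@rV_compact _ n (fun=> `[(-1 : R), 1]%classic)) => i; exact: segment_compact.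
apply: subclosed_compact box_compact _.
  exact: (closed_comp (fun x _ => mxform_continuous 1%:M x) (@closed_eq R 1)).
move=> x /= x1 i; rewrite in_itv /= -ler_norml -(ler_pXn2r (isT : 0 < 2)%N) ?nnegrE //.
rewrite real_normK ?num_real // expr1n -x1 mxform1E (bigD1 i) //= lerDl.
by apply: sumr_ge0 => k _; exact: sqr_ge0.
Qed.

Lemma mxform_sphere_min (M : 'M[R]_n) : (0 < n)%N ->
  exists2 x0, mxform 1%:M x0 x0 = 1 &
    forall x, mxform 1%:M x x = 1 -> mxform M x0 x0 <= mxform M x x.
Proof.
move=> n_gt0; set S := [set x : 'rV[R]_n | mxform 1%:M x x = 1].
have S_neq0 : S !=set0.
  by exists (delta_mx 0 (Ordinal n_gt0)); rewrite /S /= mxform_delta mxE !eqxx.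
have [x0 /set_mem Sx0 x0_min] := compact_EVT_min S_neq0 unit_sphere_compact
  (continuous_subspaceT (@mxform_continuous M)).
by exists x0 => // x Sx; apply: x0_min; rewrite inE.
Qed.

(* A minimiser x0 of the form on the unit sphere, with value m, makes M - m
   positive semidefinite with x0 in its kernel, so m is an eigenvalue. *)
Lemma lambda_min_ge_mxform {M : 'M[R]_n} {c : R} : M^T = M -> lambda_min_ge M c ->
  forall x, c * mxform 1%:M x x <= mxform M x x.
Proof.
move=> sM eigen_ge x; case: (posnP n) => [n0|n_gt0].
  move: x M {sM eigen_ge}; rewrite n0 => x M.
  by rewrite (thinmx0 x) /mxform !mul0mx mxE mulr0.
have [x0 x0_unit x0_min] := mxform_sphere_min M n_gt0.
set m := mxform M x0 x0.
have m_min := mxform_ge_of_unit_sphere M m x0_min.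
have formB y : mxform (M - m%:M) y y = mxform M y y - m * mxform 1%:M y y.
  rewrite /mxform mulmxBr mul_mx_scalar mulmxBl -scalemxAl mulmx1.
  by rewrite [LHS]mxE [X in _ + X = _]mxE [X in _ - X = _]mxE.
have : x0 *m (M - m%:M) = 0.
  apply: psd_mxform_eq0 => [|y|]; first by rewrite linearB /= sM tr_scalar_mx.
    by rewrite formB subr_ge0.
  by rewrite formB x0_unit mulr1 subrr.
rewrite mulmxBr mul_mx_scalar => /eqP; rewrite subr_eq0 => /eqP x0_eigen.
have : c <= m.
  apply: eigen_ge; apply/eigenvalueP; exists x0 => //.
  by rewrite -mxform1_eq0 x0_unit oner_eq0.
have := m_min x; have := mxform1_ge0 x; nra.
Qed.

End Rayleigh.

Lemma row_norm2_le {R : realType} m n (X : 'M[R]_(m, n)) j b : 0 <= b ->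
  mxform 1%:M (row j X) (row j X) <= b ^+ 2 -> row_norm2 X j <= b.
Proof.
move=> b_ge0; rewrite mxform1E /row_norm2.
rewrite -(ler_sqrt _ (sqr_ge0 b)) sqrtr_sqr ger0_norm //.
by under eq_bigr do rewrite mxE.
Qed.

Section LowRankChain.
Context {R : realType} {p r : nat} {U V : 'M[R]_(p, r)} (pi : 'rV[R]_p) {C1 c2 : R}.
Hypotheses (U_ge0 : forall i k, 0 <= U i k) (V_ge0 : forall i k, 0 <= V i k).
Hypothesis U_rows : U *m const_mx 1 = const_mx 1 :> 'cV[R]_p.
Hypothesis pi_stationary : pi *m (U *m V^T) = pi.
Hypotheses (p_gt0 : (0 < p)%N) (r_gt0 : (0 < r)%N) (C1_gt0 : 0 < C1) (c2_gt0 : 0 < c2).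
Hypotheses (pi_gt0 : forall j, 0 < pi 0 j) (pi_le : forall j, pi 0 j <= C1 / p%:R).
Hypothesis UDU_ge : forall x, c2 / (p%:R * r%:R) * mxform 1%:M x x
  <= mxform (U^T *m (diag_mx pi *m diag_mx pi) *m U) x x.
Hypothesis VDV_ge : forall x, c2 * r%:R * mxform 1%:M x x
  <= mxform (V^T *m diag_mx (\row_j (pi 0 j)^-1) *m V) x x.

Let p_pos : 0 < p%:R :> R. Proof. by rewrite ltr0n. Qed.
Let r_pos : 0 < r%:R :> R. Proof. by rewrite ltr0n. Qed.

Lemma U_row_sum i : \sum_k U i k = 1.
Proof.
have := congr1 (fun v : 'cV[R]_p => v i 0) U_rows; rewrite !mxE => <-.
by apply: eq_bigr => k _; rewrite mxE mulr1.
Qed.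

(* Diagonal entry k of U^T D^2 U is sum_i (pi_i U_ik)^2 <= (C1/p) (pi U)_k. *)
Lemma stationary_U_ge k : c2 / (C1 * r%:R) <= (pi *m U) 0 k.
Proof.
have diagE : (U^T *m (diag_mx pi *m diag_mx pi) *m U) k k
    = \sum_i (pi 0 i * U i k) ^+ 2.
  by rewrite mulmx_diag mul_mx_diag mxE; apply: eq_bigr => i _; rewrite !mxE; ring.
have diag_le : \sum_i (pi 0 i * U i k) ^+ 2 <= C1 / p%:R * (pi *m U) 0 k.
  rewrite mxE mulr_sumr; apply: ler_sum => i _.
  have Uik_le1 : U i k <= 1.
    by rewrite -(U_row_sum i) (bigD1 k) //= lerDl sumr_ge0.
  have a_ge0 : 0 <= pi 0 i * U i k by rewrite mulr_ge0 ?U_ge0 ?ltW.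
  have a_le : pi 0 i * U i k <= C1 / p%:R.
    exact: le_trans (ler_piMr (ltW (pi_gt0 i)) Uik_le1) (pi_le i).
  by rewrite expr2 ler_wpM2r.
have := UDU_ge (delta_mx 0 k); rewrite !mxform_delta mxE eqxx mulr1 diagE.
move=> /le_trans /(_ diag_le) /(ler_wpM2r (ltW (divr_gt0 p_pos C1_gt0))).
have -> : C1 / p%:R * (pi *m U) 0 k * (p%:R / C1) = (pi *m U) 0 k.
  by field; rewrite !gt_eqF.
by have -> : c2 / (C1 * r%:R) = c2 / (p%:R * r%:R) * (p%:R / C1) by field; rewrite !gt_eqF.
Qed.

Lemma row_sum_V_le j : \sum_k V j k <= pi 0 j * (C1 * r%:R / c2).
Proof.
have piE : pi 0 j = \sum_k (pi *m U) 0 k * V j k.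
  rewrite -{1}pi_stationary mulmxA mxE.
  by apply: eq_bigr => k _; rewrite [V^T _ _]mxE.
have : c2 / (C1 * r%:R) * \sum_k V j k <= pi 0 j.
  by rewrite piE mulr_sumr; apply: ler_sum => k _; rewrite ler_wpM2r ?stationary_U_ge.
move=> /(ler_wpM2r (ltW (divr_gt0 (mulr_gt0 C1_gt0 r_pos) c2_gt0))).
set S := \sum_k V j k.
by have -> : c2 / (C1 * r%:R) * S * (C1 * r%:R / c2) = S by field; rewrite !gt_eqF.
Qed.

Context {G H : 'M[R]_(p, r)} {s : 'rV[R]_r}.
Hypotheses (G_orth : G^T *m G = 1%:M) (H_orth : H^T *m H = 1%:M).
Hypothesis s_neq0 : forall k, s 0 k != 0.
Hypothesis svdQ : diag_mx pi *m (U *m V^T) *m diag_mx (\row_j (Num.sqrt (pi 0 j))^-1)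
  = G *m diag_mx s *m H^T.

Local Notation Dh := (diag_mx (\row_j (Num.sqrt (pi 0 j))^-1)).
Local Notation s_inv := (diag_mx (\row_k (s 0 k)^-1)).

Lemma row_norm2_G_le j :
  row_norm2 G j <= (Num.sqrt c2)^-1 * pi 0 j * Num.sqrt (p%:R * r%:R).
Proof.
set A := V^T *m Dh *m H *m s_inv.
have GE : G = diag_mx pi *m U *m A.
  by rewrite (svd_left_factor s_neq0 svdQ H_orth) /A !mulmxA.
have A_orth : A^T *m (U^T *m (diag_mx pi *m diag_mx pi) *m U) *m A = 1%:M.
  by rewrite -G_orth GE !trmx_mul !tr_diag_mx trmxK !mulmxA.
have cpr_gt0 : 0 < c2 / (p%:R * r%:R) by rewrite divr_gt0 ?mulr_gt0.
have := row_diag_mulmx_mxform1_le pi U j cpr_gt0 UDU_ge A_orth; rewrite -GE.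
have rowU_le1 : mxform 1%:M (row j U) (row j U) <= 1.
  apply: le_trans (mxform1_le_sqr_sum (row j U) _) _ => [k|]; first by rewrite mxE.
  by under eq_bigr do rewrite mxE; rewrite U_row_sum expr1n.
move=> /le_trans /(_ (ler_piMr (sqr_ge0 _) rowU_le1)).
set X := mxform 1%:M _ _ => cX_le.
apply: row_norm2_le; first by rewrite !mulr_ge0 ?invr_ge0 ?sqrtr_ge0 ?(ltW (pi_gt0 j)).
rewrite -/X !exprMn exprVn !sqr_sqrtr ?mulr_ge0 ?(ltW c2_gt0) //.
have -> : X = p%:R * r%:R / c2 * (c2 / (p%:R * r%:R) * X).
  by field; rewrite !gt_eqF ?mulr_gt0.
have -> : c2^-1 * pi 0 j ^+ 2 * (p%:R * r%:R) = p%:R * r%:R / c2 * pi 0 j ^+ 2 by ring.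
by rewrite ler_wpM2l // divr_ge0 ?mulr_ge0 ?ltW.
Qed.

Lemma row_norm2_H_le j :
  row_norm2 H j <= C1 * ((Num.sqrt c2) ^+ 3)^-1 * Num.sqrt (pi 0 j * r%:R).
Proof.
set B := U^T *m diag_mx pi *m G *m s_inv.
have HE : H = Dh *m V *m B.
  rewrite (svd_right_factor s_neq0 svdQ G_orth).
  by rewrite !trmx_mul !tr_diag_mx trmxK /B !mulmxA.
have DhDh : Dh *m Dh = diag_mx (\row_j (pi 0 j)^-1).
  rewrite mulmx_diag; congr diag_mx; apply/rowP => i.
  by rewrite !mxE -invfM -expr2 sqr_sqrtr // ltW.
have B_orth : B^T *m (V^T *m diag_mx (\row_j (pi 0 j)^-1) *m V) *m B = 1%:M.
  by rewrite -H_orth HE -DhDh !trmx_mul !tr_diag_mx trmxK !mulmxA.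
have c2r_gt0 : 0 < c2 * r%:R by rewrite mulr_gt0.
have := row_diag_mulmx_mxform1_le (\row_j (Num.sqrt (pi 0 j))^-1) V j
  c2r_gt0 VDV_ge B_orth.
rewrite -HE mxE.
have pij_gt0 := pi_gt0 j.
set K := C1 * r%:R / c2.
have rowV_le : mxform 1%:M (row j V) (row j V) <= (pi 0 j * K) ^+ 2.
  apply: le_trans (mxform1_le_sqr_sum (row j V) _) _ => [k|]; first by rewrite mxE.
  under eq_bigr do rewrite mxE.
  have : 0 <= \sum_k V j k by apply: sumr_ge0.
  have := row_sum_V_le j; rewrite -/K; nra.
rewrite exprVn sqr_sqrtr ?(ltW pij_gt0) //.
have pij_inv_ge0 : 0 <= (pi 0 j)^-1 by rewrite invr_ge0 ltW.
move=> /le_trans /(_ (ler_wpM2l pij_inv_ge0 rowV_le)).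
set X := mxform 1%:M _ _ => cX_le.
apply: row_norm2_le.
  by rewrite !mulr_ge0 ?invr_ge0 ?exprn_ge0 ?sqrtr_ge0 ?(ltW C1_gt0).
rewrite -/X !exprMn exprVn -exprM mulnC exprM.
rewrite !sqr_sqrtr ?mulr_ge0 ?(ltW c2_gt0) ?(ltW pij_gt0) ?(ltW r_pos) //.
have -> : X = (c2 * r%:R)^-1 * (c2 * r%:R * X) by field; rewrite !gt_eqF.
have -> : C1 ^+ 2 * (c2 ^+ 3)^-1 * (pi 0 j * r%:R)
    = (c2 * r%:R)^-1 * ((pi 0 j)^-1 * (pi 0 j * K) ^+ 2).
  by rewrite /K; field; rewrite !gt_eqF.
by rewrite ler_wpM2l // invr_ge0 ltW.
Qed.

End LowRankChain.

Theorem mainTheorem7 (R : realType) (p r : nat)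
  (U V : 'M[R]_(p, r)) (pi : 'rV[R]_p) (c1 C1 c2 : R)
  (G H : 'M[R]_(p, r)) (s : 'rV[R]_r) :
  (forall i k, 0 <= U i k) -> (forall i k, 0 <= V i k) ->
  U *m const_mx 1 = const_mx 1 :> 'cV[R]_p ->
  V^T *m const_mx 1 = const_mx 1 :> 'cV[R]_r ->
  transition_matrix (U *m V^T) ->
  ergodic (U *m V^T) ->
  stationary_distribution (U *m V^T) pi ->
  0 < c1 -> 0 < C1 -> 0 < c2 ->
  (forall j, c1 / p%:R <= pi 0 j /\ pi 0 j <= C1 / p%:R) ->
  lambda_min_ge (U^T *m (diag_mx pi *m diag_mx pi) *m U) (c2 / (p%:R * r%:R)) ->
  lambda_min_ge (V^T *m diag_mx (\row_j (pi 0 j)^-1) *m V) (c2 * r%:R) ->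
  G^T *m G = 1%:M -> H^T *m H = 1%:M -> (forall k, 0 < s 0 k) ->
  diag_mx pi *m (U *m V^T) *m diag_mx (\row_j (Num.sqrt (pi 0 j))^-1)
    = G *m diag_mx s *m H^T ->
  forall j : 'I_p,
    row_norm2 G j <= (Num.sqrt c2)^-1 * pi 0 j * Num.sqrt (p%:R * r%:R) /\
    row_norm2 H j <= C1 * ((Num.sqrt c2) ^+ 3)^-1 * Num.sqrt (pi 0 j * r%:R).
Proof.
move=> U_ge0 V_ge0 U_rows _ _ _ [_ [_ pi_stationary]] c1_gt0 C1_gt0 c2_gt0 pi_bounds
  UDU_min VDV_min G_orth H_orth s_gt0 svdQ j.
have p_gt0 : (0 < p)%N := leq_ltn_trans (leq0n j) (ltn_ord j).
have pi_gt0 i : 0 < pi 0 i.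
  by apply: lt_le_trans (proj1 (pi_bounds i)); rewrite divr_gt0 ?ltr0n.
have [r0|r_gt0] := posnP r.
  subst r; rewrite /row_norm2 !big_ord0 sqrtr0.
  by rewrite !mulr_ge0 ?invr_ge0 ?exprn_ge0 ?sqrtr_ge0 ?(ltW C1_gt0) ?(ltW (pi_gt0 j)).
have DD_sym : (diag_mx pi *m diag_mx pi)^T = diag_mx pi *m diag_mx pi.
  by rewrite trmx_mul tr_diag_mx.
have UDU_ge := lambda_min_ge_mxform (trmx_congr_sym U DD_sym) UDU_min.
have VDV_ge := lambda_min_ge_mxform (trmx_congr_sym V (tr_diag_mx _)) VDV_min.
have s_neq0 k : s 0 k != 0 by rewrite gt_eqF.
have pi_le i := proj2 (pi_bounds i).
split.
  exact (row_norm2_G_le pi U_ge0 U_rows p_gt0 r_gt0 c2_gt0 pi_gt0 UDU_ge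
    G_orth H_orth s_neq0 svdQ j).
exact (row_norm2_H_le pi U_ge0 V_ge0 U_rows pi_stationary p_gt0 r_gt0 C1_gt0 c2_gt0
  pi_gt0 pi_le UDU_ge VDV_ge G_orth H_orth s_neq0 svdQ j).
Qed.
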